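(* Let $G=(V,E)$ be a directed graph with edge weights $wt$ and no cycle of negative or zero weight, let $x_1,y_1,x_2,y_2\in V$, and let $e=(a,v)\in E$ with $\mathrm{dist}(x_i,y_i)=\mathrm{dist}(x_i,a)+wt(a,v)+\mathrm{dist}(v,y_i)$ for $i=1,2$. Then $$H_{av}(x_1,y_1,x_2,y_2)=F(x_2,a)\cdot z_{av}^2\cdot F_{\mathrm{disj}}(x_1,a,v,y_2)\cdot F(v,y_1).$$
   Context: Introduce an indeterminate $z_e$ (also written $z_{uv}$ for $e=(u,v)$) for each edge; polynomials have coefficients in a field of characteristic two. For a simple path $P$ with edges $e_1,\dots,e_\ell$, $f(P)=\prod_i z_{e_i}$ ($1$ for a single-vertex path). $\Pi(x,y)$ is the set of shortest paths from $x$ to $y$ and $F(x,y)=\sum_{P\in\Pi(x,y)}f(P)$. Paths from $x_1$ to $y_1$ and from $x_2$ to $y_2$ are internally vertex-disjoint if they share no vertex outside $\{x_1,y_1\}\cap\{x_2,y_2\}$; $F_{\mathrm{disj}}(x_1,y_1,x_2,y_2)=\sum f(P_1)f(P_2)$ over internally vertex-disjoint pairs $(P_1,P_2)\in\Pi(x_1,y_1)\times\Pi(x_2,y_2)$. For a path $P$ containing edge $e=(a,v)$ and vertices $x$ before $e$ and $y$ after $e$: $P[x,e]$ denotes the subpath $P[x,a]$ and $P[e,y]$ the subpath $P[v,y]$. $H_{av}(x_1,y_1,x_2,y_2)=\sum f(P_1)f(P_2)$ over pairs $(P_1,P_2)\in\Pi(x_1,y_1)\times\Pi(x_2,y_2)$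 with $e\in E(P_1)\cap E(P_2)$ and $P_1[x_1,e]$, $P_2[e,y_2]$ internally vertex-disjoint. *)

From HB Require Import structures.
From mathcomp Require Import all_boot all_order all_algebra.
From mathcomp Require Import mpoly.
Set Implicit Arguments. Unset Strict Implicit. Unset Printing Implicit Defensive.
Import Order.TTheory GRing.Theory Num.Theory.
Local Open Scope ring_scope.

Section Paths.
Variables (V : finType) (E : rel V).

Definition pedges (s : seq V) : seq (V * V) := zip s (behead s).

Fixpoint all_seqs (n : nat) : seq (seq V) :=
  if n is n'.+1 then [seq x :: s | x <- enum V, s <- all_seqs n'] else [:: [::]].

Definition is_spath (x y : V) (s : seq V) : bool :=
  match s with
  | [::] => false
  | u :: t => [&& u == x, path E u t, last u t == y & uniq s]
  end.

(* all simple paths from x to y (a simple path has at most #|V| vertices) *)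
Definition spaths (x y : V) : seq (seq V) :=
  [seq s <- flatten [seq all_seqs n | n <- iota 0 #|V|.+1] | is_spath x y s].

Variables (W : realDomainType) (wt : V -> V -> W).

Definition pweight (s : seq V) : W := \sum_(e <- pedges s) wt e.1 e.2.

Definition shortest (x y : V) : seq (seq V) :=
  [seq p <- spaths x y | all (fun q => pweight p <= pweight q) (spaths x y)].

(* dist(x,y); None encodes +infinity (y unreachable from x) *)
Definition dist (x y : V) : option W :=
  if shortest x y is p :: _ then Some (pweight p) else None.

Definition oadd (a b : option W) : option W :=
  match a, b with Some a, Some b => Some (a + b) | _, _ => None end.

Definition no_nonpos_cycle : Prop :=
  forall (x : V) (p : seq V), path E x p -> last x p = x -> p != [::] ->
    uniq p -> 0 < pweight (x :: p).

Variables (R : comRingType) (z : V -> V -> R).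

Definition fpath (s : seq V) : R := \prod_(e <- pedges s) z e.1 e.2.

Definition F (x y : V) : R := \sum_(p <- shortest x y) fpath p.

Definition int_disj (x1 y1 x2 y2 : V) (P1 P2 : seq V) : bool :=
  all (fun u => (u \in P2) ==> ((u \in [:: x1; y1]) && (u \in [:: x2; y2]))) P1.

Definition Fdisj (x1 y1 x2 y2 : V) : R :=
  \sum_(P1 <- shortest x1 y1) \sum_(P2 <- shortest x2 y2 | int_disj x1 y1 x2 y2 P1 P2)
     fpath P1 * fpath P2.

Definition prefix_to (a : V) (s : seq V) : seq V := take (index a s).+1 s.
Definition suffix_from (v : V) (s : seq V) : seq V := drop (index v s) s.

Definition Hav (a v x1 y1 x2 y2 : V) : R :=
  \sum_(P1 <- shortest x1 y1) \sum_(P2 <- shortest x2 y2 |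
      [&& (a, v) \in pedges P1, (a, v) \in pedges P2 &
          int_disj x1 a v y2 (prefix_to a P1) (suffix_from v P2)])
     fpath P1 * fpath P2.

End Paths.

(* The indeterminate z_{uw}: one variable of the polynomial ring for each
   ordered pair (u,w) of vertices (only those with E u w are ever used). *)
Definition zvar (K : fieldType) (V : finType) (u w : V) : {mpoly K[#|{: V * V}|]} :=
  'X_(enum_rank (u, w)).

(* If every cycle has positive weight, a shortest x-a path Q followed by the edge
   (a,v) and a shortest v-y path R is a simple path: a repeated vertex would let
   us cut out a positive cycle and beat dist(x,y) = dist(x,a) + wt(a,v) +
   dist(v,y). Conversely a shortest x-y path through (a,v) splits into such Q and
   R, so these paths are exactly the concatenations Q ++ R, with P[x,e] = Q and
   P[e,y] = R. H_av thus becomes a sum over quadruples (Q1, R1, Q2, R2) whose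
   only constraint, the disjointness of Q1 and R2, leaves R1 and Q2 free, and
   the sum factors. *)

From Pilot Require Import Defs.
From HB Require Import structures.
From mathcomp Require Import all_boot all_order all_algebra.
From mathcomp Require Import mpoly.
From mathcomp Require Import ring lra.
Set Implicit Arguments. Unset Strict Implicit. Unset Printing Implicit Defensive.
Import Order.TTheory GRing.Theory Num.Theory.
Local Open Scope ring_scope.

Lemma big_sum4_factor (R : comRingType) (I J K L : Type) (rI : seq I) (rJ : seq J)
    (rK : seq K) (rL : seq L) (P : I -> L -> bool)
    (A : I -> R) (B : J -> R) (C : K -> R) (D : L -> R) (c : R) :
  \sum_(i <- rI) \sum_(j <- rJ) \sum_(k <- rK) \sum_(l <- rL | P i l)
     (A i * c * B j) * (C k * c * D l) =
  (\sum_(k <- rK) C k) * c ^+ 2 * (\sum_(i <- rI) \sum_(l <- rL | P i l) A i * D l)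
     * (\sum_(j <- rJ) B j).
Proof.
transitivity (\sum_(i <- rI) \sum_(j <- rJ) \sum_(k <- rK)
               C k * c ^+ 2 * B j * \sum_(l <- rL | P i l) A i * D l).
  do 3!apply: eq_bigr => ? _; rewrite mulr_sumr; apply: eq_bigr => l _; ring.
rewrite mulrAC mulr_sumr; apply: eq_bigr => i _.
rewrite !mulr_suml exchange_big; apply: eq_bigr => k _.
by rewrite -mulr_suml -mulr_sumr.
Qed.

Section Sequences.
Variable T : eqType.

Lemma split_at_first (y : T) t : y \in t -> exists c r, t = c ++ y :: r /\ y \notin c.
Proof.
elim: t => [//|u t IH]; rewrite inE; have [-> _ | neq_yu /= /IH] := eqVneq y u.
  by exists [::], t.
by case=> c [r [-> yNc]]; exists (u :: c), r; rewrite inE negb_or neq_yu.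
Qed.

Lemma not_uniq_split (s : seq T) : ~~ uniq s ->
  exists s1 w c r, s = s1 ++ w :: c ++ w :: r /\ uniq (rcons c w).
Proof.
elim: s => [//|y t IH] /=; rewrite negb_and negbK; have [ut|nut _] := boolP (uniq t).
  rewrite orbF => /split_at_first [c [r [def_t yNc]]].
  exists [::], y, c, r; rewrite def_t rcons_uniq yNc.
  by move: ut; rewrite def_t cat_uniq => /andP[].
by have [s1 [w [c [r [-> ucw]]]]] := IH nut; exists (y :: s1), w, c, r.
Qed.

Lemma exists_argmin (R : realDomainType) (f : T -> R) (l : seq T) : l != [::] ->
  exists2 p, p \in l & all (fun q => f p <= f q) l.
Proof.
elim: l => [//|q l IH] _.
have [->|/IH [p pl pmin]] := eqVneq l [::].
  by exists q; rewrite ?mem_head //= lexx.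
have [fqp|fpq] := leP (f q) (f p).
  exists q; first exact: mem_head.
  by rewrite /= lexx; apply/allP => r /(allP pmin); apply: le_trans.
by exists p; rewrite ?inE ?pl ?orbT //= (ltW fpq).
Qed.

End Sequences.

Section ShortestPaths.
Variables (V : finType) (E : rel V) (W : realDomainType) (wt : V -> V -> W).
Local Notation pw := (pweight wt).
Local Notation Pi := (shortest E wt).

Lemma pedges_rcons_cat (s t : seq V) u :
  pedges (rcons s u ++ t) = pedges (rcons s u) ++ pedges (u :: t).
Proof.
by elim: s => [|x [|y s] IH] //; rewrite /pedges /= in IH *; rewrite IH.
Qed.

Lemma pedges_edge_cat (s t : seq V) u w :
  pedges (rcons s u ++ w :: t) = pedges (rcons s u) ++ (u, w) :: pedges (w :: t).
Proof. exact: pedges_rcons_cat. Qed.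

Lemma pweight_rcons_cat (s t : seq V) u :
  pw (rcons s u ++ t) = pw (rcons s u) + pw (u :: t).
Proof. by rewrite /pweight pedges_rcons_cat big_cat. Qed.

Lemma pweight_edge_cat (s t : seq V) u w :
  pw (rcons s u ++ w :: t) = pw (rcons s u) + wt u w + pw (w :: t).
Proof. by rewrite /pweight pedges_edge_cat big_cat big_cons /= addrA. Qed.

Lemma mem_pedges (s : seq V) u w :
  (u, w) \in pedges s -> exists p t, s = rcons p u ++ w :: t.
Proof.
elim: s => [//|x [//|y s] IH]; rewrite [pedges _]/= inE => /orP[/eqP[-> ->]|].
  by exists [::], s.
by case/IH=> p [t def_s]; exists (x :: p), t; rewrite def_s.
Qed.

Lemma is_spathE x y (s : seq V) :
  is_spath E x y s = [&& s != [::], head x s == x, sorted E s, last x s == y & uniq s].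
Proof. by case: s. Qed.

Lemma size_all_seqs n (s : seq V) : s \in all_seqs V n -> size s = n.
Proof.
elim: n s => [|n IH] s /=; first by rewrite inE => /eqP ->.
by case/allpairsP=> [[u t] [_ /IH + ->]] /= => ->.
Qed.

Lemma mem_all_seqs (s : seq V) : s \in all_seqs V (size s).
Proof.
elim: s => [|u s IH] /=; first by rewrite inE.
by apply/allpairsP; exists (u, s); rewrite mem_enum.
Qed.

Lemma uniq_all_seqs n : uniq (all_seqs V n).
Proof.
elim: n => [//|n IH] /=; apply: allpairs_uniq; rewrite ?enum_uniq //.
by move=> [u s] [w t] _ _ [-> ->].
Qed.

Lemma uniq_spaths x y : uniq (spaths E x y).
Proof.
apply: filter_uniq; elim: #|V|.+1 0%N => [//|k IH] m /=.
rewrite cat_uniq uniq_all_seqs IH andbT; apply/hasPn => s /flattenP [t /mapP [n]].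
rewrite mem_iota => /andP [lt_m_n _] -> /size_all_seqs size_s.
by apply: contraTN lt_m_n => /size_all_seqs <-; rewrite size_s ltnn.
Qed.

Lemma mem_spaths x y s : (s \in spaths E x y) = is_spath E x y s.
Proof.
rewrite mem_filter; have [sp|//] := boolP (is_spath E x y s); rewrite andTb.
apply/flattenP; exists (all_seqs V (size s)); last exact: mem_all_seqs.
apply/mapP; exists (size s) => //; rewrite mem_iota ltnS cardE.
apply: uniq_leq_size => [|u _]; last by rewrite mem_enum.
by move: sp; rewrite is_spathE => /and5P [].
Qed.

Lemma uniq_shortest x y : uniq (Pi x y).
Proof. exact/filter_uniq/uniq_spaths. Qed.

Lemma mem_shortest x y p :
  (p \in Pi x y) = is_spath E x y p && all (fun q => pw p <= pw q) (spaths E x y).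
Proof. by rewrite mem_filter mem_spaths andbC. Qed.

Lemma shortest_spath x y p : p \in Pi x y -> is_spath E x y p.
Proof. by rewrite mem_shortest => /andP []. Qed.

Lemma shortest_uniq x y p : p \in Pi x y -> uniq p.
Proof. by move/shortest_spath; rewrite is_spathE => /and5P []. Qed.

Lemma shortest_dist x y p : p \in Pi x y -> dist E wt x y = Some (pw p).
Proof.
rewrite /dist; case def_Pi: (Pi x y) => [//|p0 l] p_Pi; have: p0 \in Pi x y.
  by rewrite def_Pi mem_head.
rewrite -def_Pi !mem_shortest in p_Pi * => /andP [sp0 min_p0].
case/andP: p_Pi => sp min_p; congr Some; apply/eqP; rewrite eq_le.
by rewrite (allP min_p0) ?(allP min_p) ?mem_spaths.
Qed.

Lemma dist_spath x y p :
  is_spath E x y p -> exists2 d, dist E wt x y = Some d & d <= pw p.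
Proof.
rewrite -mem_spaths => p_spaths.
have [|q q_spaths min_q] := exists_argmin pw (l := spaths E x y).
  by apply: contraTneq p_spaths => ->.
have q_Pi : q \in Pi x y by rewrite mem_filter min_q.
by exists (pw q); [apply: shortest_dist | apply: (allP min_q)].
Qed.

Lemma mem_shortest_dist x y p :
  (p \in Pi x y) = is_spath E x y p && (dist E wt x y == Some (pw p)).
Proof.
apply/idP/andP => [p_Pi | [sp /eqP dist_p]].
  by rewrite shortest_spath // (shortest_dist p_Pi).
rewrite mem_shortest sp; apply/allP => q; rewrite mem_spaths => /dist_spath [d].
by rewrite dist_p => -[->].
Qed.

Lemma shortest_last x y p : p \in Pi x y -> exists s, p = rcons s y.
Proof.
move/shortest_spath; case/lastP: p => [//|s u].
by rewrite is_spathE last_rcons => /and5P [_ _ _ /eqP -> _]; exists s.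
Qed.

Lemma shortest_head x y p : p \in Pi x y -> exists t, p = x :: t.
Proof. by move/shortest_spath; case: p => [//|u t] /and4P [/eqP -> _ _ _]; exists t. Qed.

Lemma pedges_shortest_cat x y a v Q R : Q \in Pi x a -> R \in Pi v y ->
  pedges (Q ++ R) = pedges Q ++ (a, v) :: pedges R.
Proof.
by move=> /shortest_last [s ->] /shortest_head [t ->]; apply: pedges_edge_cat.
Qed.

Lemma is_spath_edge_cat x y (s t : seq V) u w :
  is_spath E x y (rcons s u ++ w :: t) ->
  is_spath E x u (rcons s u) /\ is_spath E w y (w :: t).
Proof.
rewrite !is_spathE => /and5P [_ hd srt lst uq].
move: uq; rewrite cat_uniq => /and3P [-> _ ->].
move: srt; rewrite cat_rcons sorted_cat_cons /= => /and3P [-> _ ->].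
rewrite last_cat last_rcons in lst; rewrite lst last_rcons -size_eq0 size_rcons.
by case: s hd => [|? ?] /= ->; rewrite !eqxx.
Qed.

Lemma fpath_shortest_cat (R : comRingType) (z : V -> V -> R) x y a v Q R' :
  Q \in Pi x a -> R' \in Pi v y ->
  Defs.fpath z (Q ++ R') = Defs.fpath z Q * z a v * Defs.fpath z R'.
Proof.
move=> Q_Pi R_Pi; rewrite /Defs.fpath (pedges_shortest_cat Q_Pi R_Pi).
by rewrite big_cat big_cons /= mulrA.
Qed.

Lemma prefix_to_rcons_cat (s t : seq V) a :
  a \notin s -> prefix_to a (rcons s a ++ t) = rcons s a.
Proof.
move=> aNs; rewrite /prefix_to cat_rcons index_cat (negbTE aNs) /= eqxx addn0.
by rewrite -cat_rcons take_size_cat ?size_rcons.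
Qed.

Lemma suffix_from_cat_cons (s t : seq V) v :
  v \notin s -> suffix_from v (s ++ v :: t) = v :: t.
Proof.
by move=> vNs; rewrite /suffix_from index_cat (negbTE vNs) /= eqxx addn0 drop_size_cat.
Qed.

Hypothesis pos_cycles : no_nonpos_cycle E wt.

Lemma pweight_cut_cycle (s c r : seq V) w :
  sorted E (s ++ w :: c ++ w :: r) -> uniq (rcons c w) ->
  pw (s ++ w :: r) < pw (s ++ w :: c ++ w :: r).
Proof.
move=> srt ucw; have cycle_path : path E w (rcons c w).
  by move: srt; rewrite sorted_cat_cons -cat_rcons cat_path => /and3P [].
rewrite -[s ++ w :: r]cat_rcons -cat_rcons !pweight_rcons_cat ltrD2l.
rewrite -[w :: c ++ w :: r]/((w :: c) ++ w :: r) -cat_rcons pweight_rcons_cat ltrDr.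
by apply: pos_cycles; rewrite ?last_rcons -?size_eq0 ?size_rcons.
Qed.

Lemma nonsimple_walk_shortcut x y s :
  s != [::] -> head x s = x -> sorted E s -> last x s = y -> ~~ uniq s ->
  exists2 s', is_spath E x y s' & pw s' < pw s.
Proof.
have [n] := ubnP (size s); elim: n s => // n IH s /ltnSE size_s _ hd srt lst.
case/not_uniq_split=> s1 [w [c [r [def_s ucw]]]]; subst s; set s2 := s1 ++ w :: r.
have lt_s2 := pweight_cut_cycle srt ucw.
have ne_s2 : s2 != [::] by rewrite -size_eq0 size_cat addnS.
have hd2 : head x s2 = x by rewrite /s2; case: (s1) hd.
have srt2 : sorted E s2.
  by move: srt; rewrite !sorted_cat_cons cat_path /= => /and3P [-> _ /andP [_ ->]].
have lst2 : last x s2 = y by rewrite -lst !last_cat /= last_cat.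
have [us2|nus2] := boolP (uniq s2).
  by exists s2; rewrite // is_spathE ne_s2 hd2 srt2 lst2 us2 !eqxx.
have size_s2 : (size s2 < n)%N.
  by apply: leq_trans size_s; rewrite !size_cat /= size_cat ltn_add2l ltnS leq_addl.
have [s' sp' lt_s'] := IH s2 size_s2 ne_s2 hd2 srt2 lst2 nus2.
by exists s'; last exact: lt_trans lt_s' lt_s2.
Qed.

Section ThroughEdge.
Variables (x y a v : V).
Hypotheses (Eav : E a v)
  (dist_via_av : dist E wt x y = oadd (oadd (dist E wt x a) (Some (wt a v))) (dist E wt v y)).

Lemma cat_shortest Q R : Q \in Pi x a -> R \in Pi v y -> Q ++ R \in Pi x y.
Proof.
move=> Q_Pi R_Pi; have [s def_Q] := shortest_last Q_Pi.
have [t def_R] := shortest_head R_Pi.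
have dist_QR : dist E wt x y = Some (pw (Q ++ R)).
  rewrite dist_via_av (shortest_dist Q_Pi) (shortest_dist R_Pi) def_Q def_R.
  by rewrite pweight_edge_cat.
move: Q_Pi R_Pi dist_QR; rewrite def_Q def_R => /shortest_spath + /shortest_spath.
rewrite !is_spathE => /and5P [_ hd srt _ _] /and5P [_ _ srt' lst _] dist_QR.
have ne : rcons s a ++ v :: t != [::] by rewrite -size_eq0 size_cat size_rcons.
have {}hd : head x (rcons s a ++ v :: t) = x by case: (s) hd => [|? ?] /= /eqP.
have {}srt : sorted E (rcons s a ++ v :: t).
  by rewrite cat_rcons sorted_cat_cons srt /= Eav.
have {}lst : last x (rcons s a ++ v :: t) = y by rewrite last_cat; apply/eqP.
have uniq_QR : uniq (rcons s a ++ v :: t).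
  apply: contraT => /(nonsimple_walk_shortcut ne hd srt lst) [s' /dist_spath [d]].
  by rewrite dist_QR => -[<-] /le_gtF ->.
by rewrite mem_shortest_dist is_spathE ne hd srt lst uniq_QR dist_QR !eqxx.
Qed.

Lemma shortest_through_edge P : P \in Pi x y -> (a, v) \in pedges P ->
  exists Q R, [/\ Q \in Pi x a, R \in Pi v y & P = Q ++ R].
Proof.
move=> P_Pi /mem_pedges [s [t def_P]]; exists (rcons s a), (v :: t).
have := P_Pi; rewrite def_P => /shortest_spath /is_spath_edge_cat [sQ sR].
have [[da dist_a le_a] [db dist_b le_b]] := (dist_spath sQ, dist_spath sR).
have := shortest_dist P_Pi; rewrite dist_via_av dist_a dist_b def_P pweight_edge_cat.
case=> sum_eq; have eq_a : pw (rcons s a) = da by lra.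
have eq_b : pw (v :: t) = db by lra.
split=> //; first by rewrite mem_shortest_dist sQ dist_a eq_a eqxx.
by rewrite mem_shortest_dist sR dist_b eq_b eqxx.
Qed.

Lemma prefix_to_shortest_cat Q R :
  Q \in Pi x a -> R \in Pi v y -> prefix_to a (Q ++ R) = Q.
Proof.
move=> Q_Pi R_Pi; have := shortest_uniq (cat_shortest Q_Pi R_Pi).
have [s ->] := shortest_last Q_Pi; rewrite cat_uniq rcons_uniq => /andP [/andP [aNs _] _].
exact: prefix_to_rcons_cat.
Qed.

Lemma suffix_from_shortest_cat Q R :
  Q \in Pi x a -> R \in Pi v y -> suffix_from v (Q ++ R) = R.
Proof.
move=> Q_Pi R_Pi; have := shortest_uniq (cat_shortest Q_Pi R_Pi).
have [t ->] := shortest_head R_Pi; rewrite cat_uniq => /and3P [_ /hasPn vNQ _].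
by rewrite suffix_from_cat_cons ?vNQ ?mem_head.
Qed.

Lemma perm_shortest_through_edge :
  perm_eq [seq P <- Pi x y | (a, v) \in pedges P] [seq Q ++ R | Q <- Pi x a, R <- Pi v y].
Proof.
apply: uniq_perm; first exact/filter_uniq/uniq_shortest.
  apply: allpairs_uniq; rewrite ?uniq_shortest // => -[Q R] [Q' R'].
  move=> /allpairsP [[Q1 R1] [/= Q_Pi R_Pi [-> ->]]].
  move=> /allpairsP [[Q1' R1'] [/= Q'_Pi R'_Pi [-> ->]]] /= eq_QR.
  move: (prefix_to_shortest_cat Q_Pi R_Pi) (suffix_from_shortest_cat Q_Pi R_Pi).
  by rewrite eq_QR prefix_to_shortest_cat // suffix_from_shortest_cat // => -> ->.
move=> P; rewrite mem_filter.
apply/andP/allpairsP => [[av_P P_Pi] | [[Q R] [/= Q_Pi R_Pi ->]]].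
  by have [Q [R [Q_Pi R_Pi ->]]] := shortest_through_edge P_Pi av_P; exists (Q, R).
by rewrite (pedges_shortest_cat Q_Pi R_Pi) mem_cat mem_head orbT cat_shortest.
Qed.

Lemma big_shortest_through_edge (T : Type) (idx : T) (op : Monoid.com_law idx)
    (G : seq V -> T) :
  \big[op/idx]_(P <- Pi x y | (a, v) \in pedges P) G P =
  \big[op/idx]_(Q <- Pi x a) \big[op/idx]_(R <- Pi v y) G (Q ++ R).
Proof. by rewrite -big_filter (perm_big _ perm_shortest_through_edge) big_allpairs_dep. Qed.
End ThroughEdge.

Lemma Hav_factor (R : comRingType) (z : V -> V -> R) x1 y1 x2 y2 a v :
  E a v ->
  dist E wt x1 y1 = oadd (oadd (dist E wt x1 a) (Some (wt a v))) (dist E wt v y1) ->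
  dist E wt x2 y2 = oadd (oadd (dist E wt x2 a) (Some (wt a v))) (dist E wt v y2) ->
  Hav E wt z a v x1 y1 x2 y2 =
    F E wt z x2 a * z a v ^+ 2 * Fdisj E wt z x1 a v y2 * F E wt z v y1.
Proof.
move=> Eav dist1 dist2; rewrite -big_sum4_factor.
transitivity (\sum_(P1 <- Pi x1 y1 | (a, v) \in pedges P1)
  \sum_(P2 <- Pi x2 y2 | ((a, v) \in pedges P2) &&
                          int_disj x1 a v y2 (prefix_to a P1) (suffix_from v P2))
    Defs.fpath z P1 * Defs.fpath z P2).
  rewrite big_mkcond; apply: eq_bigr => P1 _; case: ifP => // av_P1.
  by rewrite big_pred0 // => P2; rewrite av_P1.
rewrite (big_shortest_through_edge Eav dist1); apply: eq_big_seq => Q1 Q1_Pi.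
apply: eq_big_seq => R1 R1_Pi; rewrite (prefix_to_shortest_cat Eav dist1 Q1_Pi R1_Pi).
rewrite big_mkcondr (big_shortest_through_edge Eav dist2); apply: eq_big_seq => Q2 Q2_Pi.
rewrite [RHS]big_mkcond; apply: eq_big_seq => R2 R2_Pi.
rewrite (suffix_from_shortest_cat Eav dist2 Q2_Pi R2_Pi).
by rewrite (fpath_shortest_cat _ Q1_Pi R1_Pi) (fpath_shortest_cat _ Q2_Pi R2_Pi).
Qed.
End ShortestPaths.

Theorem lemma7 (V : finType) (E : rel V) (W : realDomainType) (wt : V -> V -> W)
    (K : fieldType) (charK : 2%N \in [pchar K]) (x1 y1 x2 y2 a v : V) :
  no_nonpos_cycle E wt ->
  E a v ->
  dist E wt x1 y1 = oadd (oadd (dist E wt x1 a) (Some (wt a v))) (dist E wt v y1) ->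
  dist E wt x2 y2 = oadd (oadd (dist E wt x2 a) (Some (wt a v))) (dist E wt v y2) ->
  Hav E wt (@zvar K V) a v x1 y1 x2 y2 =
    F E wt (@zvar K V) x2 a * (zvar K a v) ^+ 2 * Fdisj E wt (@zvar K V) x1 a v y2
    * F E wt (@zvar K V) v y1.
Proof.
by move=> pos_cycles; apply: Hav_factor.
Qed.
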